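(* Under the assumptions of the following setting: (CVX), (SM), (BV) hold; $i\in[n]$ and a round $p$ of PEARL-SGD are fixed; $\gamma_k\equiv\gamma$ for $k=\tau p,\dots,\tau(p+1)-1$ with $0<\gamma\le\frac1{L_i}\min\{1,\frac1{\tau-1}\}$ (with $\frac{1}{\tau-1}=+\infty$ if $\tau=1$). Then for $j=\tau p+1,\dots,\tau(p+1)$, $$\mathbb{E}\big[\|\nabla f_i(x^i_j;x^{-i}_{\tau p})\|^2\,\big|\,\mathbf{x}_{\tau p}\big]\le\|\nabla f_i(x^i_{\tau p};x^{-i}_{\tau p})\|^2+2(j-\tau p)\gamma L_i\sigma_i^2.$$
   Context: Setup. Let $n\ge1$, $D=d_1+\dots+d_n$, joint action $\mathbf{x}=(x^1,\dots,x^n)\in\mathbb{R}^D$, $x^i\in\mathbb{R}^{d_i}$, $x^{-i}$ all blocks except the $i$-th, $f_i(x^i;x^{-i})=f_i(\mathbf{x})$. For each $i$, $f_i(\mathbf{x})=\mathbb{E}_{\xi\sim\mathcal{D}_i}[f_{i,\xi}(\mathbf{x})]$; $\nabla f_i(x^i;x^{-i})$, $\nabla f_{i,\xi}(x^i;x^{-i})$ are gradients in $x^i$ only, with $\mathbb{E}_{\xi\sim\mathcal{D}_i}[\nabla f_{i,\xi}(x^i;x^{-i})]=\nabla f_i(x^i;x^{-i})$. (CVX): each $f_i(\cdot;x^{-i})$ is convex. (SM): $\|\nabla f_i(x^i;x^{-i})-\nabla f_i(y^i;x^{-i})\|\le L_i\|x^i-y^i\|$. (BV): $\mathbb{E}_{\xi\sim\mathcal{D}_i}\|\nabla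 f_{i,\xi}(x^i;x^{-i})-\nabla f_i(x^i;x^{-i})\|^2\le\sigma_i^2$ for all $x^i,x^{-i}$. PEARL-SGD: given $\mathbf{x}_0$, $\tau\ge1$, $R\ge1$, step-sizes $\gamma_k>0$: for $p=0,\dots,R-1$, each $i$, $k=\tau p,\dots,\tau(p+1)-1$, draw $\xi^i_k\sim\mathcal{D}_i$ independently of the past and set $x^i_{k+1}=x^i_k-\gamma_k\nabla f_{i,\xi^i_k}(x^i_k;x^{-i}_{\tau p})$; $\mathbf{x}_k=(x^1_k,\dots,x^n_k)$. *)

From HB Require Import structures.
From mathcomp Require Import all_boot all_order all_algebra.
From mathcomp Require Import all_classical all_reals all_analysis.
Set Implicit Arguments. Unset Strict Implicit. Unset Printing Implicit Defensive.
Import Order.TTheory GRing.Theory Num.Theory.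
Import numFieldNormedType.Exports.
Local Open Scope ring_scope.

Section Defs.
Variable R : realType.

Definition dotv k (u v : 'rV[R]_k) : R := \sum_(c < k) u 0 c * v 0 c.
Definition sqnorm k (v : 'rV[R]_k) : R := \sum_(c < k) (v 0 c) ^+ 2.
Definition enorm k (v : 'rV[R]_k) : R := Num.sqrt (sqnorm v).

Definition is_grad k (h : 'rV[R]_k -> R) (x g : 'rV[R]_k) : Prop :=
  differentiable h x /\ forall v : 'rV[R]_k, 'D_v h x = dotv g v.

Definition convex_fun k (h : 'rV[R]_k -> R) : Prop :=
  forall (y z : 'rV[R]_k) (t : R), 0 <= t <= 1 ->
    h (t *: y + (1 - t) *: z) <= t * h y + (1 - t) * h z.

(* joint actions x = (x^1,...,x^n), x^j in R^{d j} *)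
Definition jact (n : nat) (d : 'I_n -> nat) := forall j : 'I_n, 'rV[R]_(d j).

(* (y ; x^{-i}) : replace the i-th block of x by y *)
Definition upd n (d : 'I_n -> nat) (x : jact d) (i : 'I_n) (y : 'rV[R]_(d i))
  : jact d :=
  fun j => match @eqP _ i j with
           | ReflectT e => castmx (erefl 1%N, congr1 d e) y
           | ReflectF _ => x j
           end.

(* Expectation of h(y_t), where y_0 = y and y_{s+1} = y_s - gam * g xi_s y_s
   with xi_0, xi_1, ... i.i.d. with law P (iterated integral over the
   independent samples, xi_0 outermost). *)
Fixpoint local_sgd_expect d0 (T : measurableType d0) (P : probability T R)
  k (g : T -> 'rV[R]_k -> 'rV[R]_k) (gam : R) (h : 'rV[R]_k -> \bar R)
  (t : nat) (y : 'rV[R]_k) {struct t} : \bar R :=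
  match t with
  | 0%N => h y
  | t'.+1 => (\int[P]_xi local_sgd_expect P g gam h t' (y - gam *: g xi y))%E
  end.

End Defs.

Arguments dotv {R k} u v.
Arguments sqnorm {R k} v.
Arguments enorm {R k} v.
Arguments is_grad {R k} h x g.
Arguments convex_fun {R k} h.
Arguments upd {R n d} x i y.
Arguments local_sgd_expect {R d0 T} P {k} g gam h t y.

From HB Require Import structures.
From mathcomp Require Import all_boot all_order all_algebra.
From mathcomp Require Import all_classical all_reals all_analysis.
Import Order.TTheory GRing.Theory Num.Theory.
Import numFieldNormedType.Exports.
From mathcomp Require Import ring lra.
Local Open Scope ring_scope.

(* For a convex L-smooth function phi with gradient G, the descent lemma and
   the first-order convexity inequality give the co-coercivity of G,
   |G z - G x|^2 <= L <G z - G x, z - x>.  For one stochastic gradient step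
   y' = y - gam g with gam L <= 1 this yields, pathwise and without any use of
   unbiasedness, |G y'|^2 <= |G y|^2 + gam L |g - G y|^2.  Integrating step by
   step against the variance bound, each local step adds at most gam L sigma^2,
   which is half the increment allowed in the statement. *)

Lemma normr_2mul_le {R : realFieldType} (x y c : R) : 0 < c ->
  `|2 * (x * y)| <= x ^+ 2 / c + c * y ^+ 2.
Proof.
move=> c0; rewrite ler_norml lerNl; apply/andP; split; rewrite -subr_ge0.
- have -> : x ^+ 2 / c + c * y ^+ 2 - - (2 * (x * y)) = (x + c * y) ^+ 2 / c.
    by field; rewrite gt_eqF.
  by rewrite divr_ge0 ?sqr_ge0 ?ltW.
- have -> : x ^+ 2 / c + c * y ^+ 2 - 2 * (x * y) = (x - c * y) ^+ 2 / c.
    by field; rewrite gt_eqF.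
  by rewrite divr_ge0 ?sqr_ge0 ?ltW.
Qed.

Section InnerProduct.
Context {R : realType} {k : nat}.
Implicit Types a b v w : 'rV[R]_k.

Lemma dotvC a b : dotv a b = dotv b a.
Proof. by apply: eq_bigr => c _; rewrite mulrC. Qed.

Lemma dotvDl a b v : dotv (a + b) v = dotv a v + dotv b v.
Proof. by rewrite /dotv -big_split; apply: eq_bigr => c _; rewrite !mxE mulrDl. Qed.

Lemma dotvNl a v : dotv (- a) v = - dotv a v.
Proof. by rewrite /dotv -sumrN; apply: eq_bigr => c _; rewrite !mxE mulNr. Qed.

Lemma dotvBl a b v : dotv (a - b) v = dotv a v - dotv b v.
Proof. by rewrite dotvDl dotvNl. Qed.

Lemma dotvZl s a v : dotv (s *: a) v = s * dotv a v.
Proof. by rewrite /dotv mulr_sumr; apply: eq_bigr => c _; rewrite !mxE mulrA. Qed.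

Lemma dotvDr a v w : dotv a (v + w) = dotv a v + dotv a w.
Proof. by rewrite dotvC dotvDl !(dotvC a). Qed.

Lemma dotvNr a v : dotv a (- v) = - dotv a v.
Proof. by rewrite dotvC dotvNl dotvC. Qed.

Lemma dotvZr s a v : dotv a (s *: v) = s * dotv a v.
Proof. by rewrite dotvC dotvZl dotvC. Qed.

Lemma sqnormE a : sqnorm a = dotv a a.
Proof. by apply: eq_bigr => c _; rewrite expr2. Qed.

Lemma sqnorm_ge0 a : 0 <= sqnorm a.
Proof. by apply: sumr_ge0 => c _; rewrite sqr_ge0. Qed.

Lemma sqnorm_eq0 a : (sqnorm a == 0) = (a == 0).
Proof.
apply/idP/eqP => [|->]; last by rewrite /sqnorm big1 // => c _; rewrite mxE expr0n.
rewrite psumr_eq0 => [/allP a0|c _]; last exact: sqr_ge0.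
by apply/rowP => c; rewrite mxE; apply/eqP; rewrite -sqrf_eq0; exact: a0 (mem_index_enum c).
Qed.

Lemma sqnormD a b : sqnorm (a + b) = sqnorm a + 2 * dotv a b + sqnorm b.
Proof. by rewrite !sqnormE dotvDl !dotvDr (dotvC b a); ring. Qed.

Lemma sqnormN a : sqnorm (- a) = sqnorm a.
Proof. by rewrite !sqnormE dotvNl dotvNr opprK. Qed.

Lemma sqnormZ s a : sqnorm (s *: a) = s ^+ 2 * sqnorm a.
Proof. by rewrite !sqnormE dotvZl dotvZr mulrA expr2. Qed.

Lemma sqnorm_le_sqr a e : 0 <= e -> enorm a <= e -> sqnorm a <= e ^+ 2.
Proof.
by move=> e0 ae; rewrite -(sqr_sqrtr (sqnorm_ge0 a)) ler_sqr ?nnegrE ?sqrtr_ge0.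
Qed.

Lemma dotv_amgm a v c : 0 < c ->
  `|2 * dotv a v| <= sqnorm a / c + c * sqnorm v.
Proof.
move=> c0; rewrite /dotv /sqnorm mulr_suml mulr_sumr mulr_sumr -big_split /=.
apply: le_trans (ler_norm_sum _ _ _) _; apply: ler_sum => i _.
exact: normr_2mul_le.
Qed.

Lemma normr_dotv_le a v c : 0 <= c -> sqnorm a <= c ^+ 2 * sqnorm v ->
  `|dotv a v| <= c * sqnorm v.
Proof.
move=> c0 av; have [c00|cn0] := eqVneq c 0.
  move: av; rewrite c00 expr0n mul0r => a0.
  have /eqP -> : a == 0 by rewrite -sqnorm_eq0 eq_le a0 sqnorm_ge0.
  by rewrite /dotv big1 ?normr0 ?mul0r // => i _; rewrite mxE mul0r.
have cp : 0 < c by rewrite lt_def cn0 c0.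
have := dotv_amgm a v c cp; rewrite normrM ger0_norm //.
have : sqnorm a / c <= c * sqnorm v by rewrite ler_pdivrMr // mulrAC -expr2.
lra.
Qed.

End InnerProduct.

Section FirstOrderTaylor.
Context {R : realType}.

Lemma taylor1_le {psi dpsi : R -> R} {M : R} :
  (forall t : R, is_derive t (1 : R) psi (dpsi t)) ->
  (forall t, 0 <= t -> dpsi t - dpsi 0 <= M * t) ->
  forall s, 0 <= s -> psi s <= psi 0 + s * dpsi 0 + M / 2 * s ^+ 2.
Proof.
move=> psi_deriv dpsi_le s s0.
(* g' = dg <= 0 on [0, s], so g s <= g 0 by the mean value theorem. *)
pose g : R -> R := psi - dpsi 0 \*: id - (M / 2) \*: (id * id).
pose dg t := dpsi t - dpsi 0 - M * t.
have scaleE (a b : R) : a *: b = a * b by [].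
have g_deriv (t : R) : is_derive t (1 : R) g (dg t).
  have := is_deriveB (is_deriveB (psi_deriv t) (is_deriveZ (dpsi 0) (is_derive_id t 1)))
    (is_deriveZ (M / 2) (is_deriveM (is_derive_id t 1) (is_derive_id t 1))).
  by move/is_derive_eq; apply; rewrite /dg !scaleE !mulr1; lra.
have g_cont := @derivable_within_continuous _ _ g `[0, s]
  (fun t _ => @ex_derive _ _ _ _ _ _ _ (g_deriv t)).
have [c c0s g_mvt] := MVT_segment s0 (fun t _ => g_deriv t) g_cont.
have : g s - g 0 <= 0.
  rewrite g_mvt subr0 mulr_le0_ge0 // /dg subr_le0; apply: dpsi_le.
  by move: c0s; rewrite in_itv /= => /andP[].
have gE t : g t = psi t - dpsi 0 * t - M / 2 * (t * t) by [].
rewrite !gE expr2; lra.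
Qed.

Lemma taylor1_normr_le {psi dpsi : R -> R} {M : R} :
  (forall t : R, is_derive t (1 : R) psi (dpsi t)) ->
  (forall t, 0 <= t -> `|dpsi t - dpsi 0| <= M * t) ->
  forall s, 0 <= s -> `|psi s - psi 0 - s * dpsi 0| <= M / 2 * s ^+ 2.
Proof.
move=> psi_deriv dpsi_lip s s0.
have [dpsi_lo dpsi_hi] : (forall t, 0 <= t -> - dpsi t - - dpsi 0 <= M * t) /\
                         (forall t, 0 <= t -> dpsi t - dpsi 0 <= M * t).
  by split=> t /dpsi_lip; rewrite ler_norml => /andP[]; lra.
have lo : - psi s <= - psi 0 + s * - dpsi 0 + M / 2 * s ^+ 2.
  exact: taylor1_le (fun t => is_deriveN (psi_deriv t)) dpsi_lo s s0.
have hi := taylor1_le psi_deriv dpsi_hi s s0.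
by rewrite ler_norml; apply/andP; split; lra.
Qed.

End FirstOrderTaylor.

Section SmoothFunction.
Context {R : realType} {k : nat}.
Variables (phi : 'rV[R]_k -> R) (G : 'rV[R]_k -> 'rV[R]_k) (L : R).
Hypothesis phi_grad : forall y, is_grad phi y (G y).
Hypothesis L_ge0 : 0 <= L.
Hypothesis G_lip : forall y z, enorm (G y - G z) <= L * enorm (y - z).

Lemma is_derive_line y v (t : R) :
  is_derive t 1 (fun s : R => phi (y + s *: v)) (dotv (G (y + t *: v)) v).
Proof.
(* The two sides are the difference quotients defining either derivative. *)
have shiftE : (fun h : R => h^-1 *: (((fun s => phi (y + s *: v)) \o shift t) (h *: 1)
                - phi (y + t *: v))) =
              (fun h : R => h^-1 *: ((phi \o shift (y + t *: v)) (h *: v) - phi (y + t *: v))).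
  apply: funext => h /=; congr (_ *: (phi _ - _)).
  by rewrite /shift /= -[h *: 1]/(h * 1) mulr1 scalerDl addrCA addrA.
split; rewrite /derivable /derive shiftE.
- exact/diff_derivable/(phi_grad _).1.
- exact: (phi_grad _).2.
Qed.

Lemma sqnorm_lip y z : sqnorm (G y - G z) <= L ^+ 2 * sqnorm (y - z).
Proof.
have := sqnorm_le_sqr _ _ (mulr_ge0 L_ge0 (sqrtr_ge0 _)) (G_lip y z).
by rewrite exprMn sqr_sqrtr // sqnorm_ge0.
Qed.

Lemma taylor_line z h s : 0 <= s ->
  `|phi (z + s *: h) - phi z - s * dotv (G z) h| <= L * sqnorm h / 2 * s ^+ 2.
Proof.
move=> s0.
have dlip t : 0 <= t ->
    `|dotv (G (z + t *: h)) h - dotv (G (z + 0 *: h)) h| <= L * sqnorm h * t.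
  move=> t0; rewrite scale0r addr0 -dotvBl mulrAC.
  apply: normr_dotv_le; first exact: mulr_ge0.
  by apply: le_trans (sqnorm_lip _ _) _; rewrite addrAC subrr add0r sqnormZ exprMn mulrA.
by have := taylor1_normr_le (is_derive_line z h) dlip s s0; rewrite !scale0r !addr0.
Qed.

Lemma descent z h : phi (z + h) <= phi z + dotv (G z) h + L / 2 * sqnorm h.
Proof.
have := taylor_line z h 1 ler01; rewrite scale1r mul1r expr1n mulr1 ler_norml => /andP[_].
by rewrite mulrAC; lra.
Qed.

Hypothesis phi_cvx : convex_fun phi.

Lemma convex_grad_le x w : phi x + dotv (G x) (w - x) <= phi w.
Proof.
set h := w - x; set M := L * sqnorm h.
have M0 : 0 <= M by rewrite mulr_ge0 // sqnorm_ge0.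
have slope_le s : 0 < s -> s <= 1 -> dotv (G x) h <= phi w - phi x + M / 2 * s.
  move=> s0 s1; have := taylor_line x h s (ltW s0); rewrite ler_norml => /andP[lo _].
  have := phi_cvx w x s; rewrite (ltW s0) s1 => /(_ isT).
  have -> : s *: w + (1 - s) *: x = x + s *: h.
    by rewrite /h scalerBl scale1r scalerBr addrCA addrA.
  rewrite -/M in lo; nra.
rewrite addrC -lerBrDr; apply/ler_addgt0Pr => e e0.
set s := e / (e + M).
have eM0 : 0 < e + M by rewrite ltr_wpDr.
have s0 : 0 < s by rewrite divr_gt0.
have s1 : s <= 1 by rewrite ler_pdivrMr // mul1r lerDl.
have sE : s * (e + M) = e by rewrite divfK // gt_eqF.
apply: le_trans (slope_le s s0 s1) _; nra.
Qed.

Lemma convex_smooth_grad_gap x z : 0 < L ->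
  phi x + dotv (G x) (z - x) + sqnorm (G z - G x) / (2 * L) <= phi z.
Proof.
move=> L0; set D := G z - G x; set h := (- L^-1) *: D.
have desc := descent z h; have cvx := convex_grad_le x (z + h).
rewrite addrAC dotvDr in cvx.
have dotE : dotv (G z) h - dotv (G x) h = - (2 * (sqnorm D / (2 * L))).
  by rewrite -dotvBl dotvZr sqnormE; field; rewrite gt_eqF.
have hE : L / 2 * sqnorm h = sqnorm D / (2 * L).
  by rewrite sqnormZ sqrrN; field; rewrite gt_eqF.
lra.
Qed.

Lemma grad_cocoercive x z : sqnorm (G z - G x) <= L * dotv (G z - G x) (z - x).
Proof.
have [L0|Ln0] := eqVneq L 0.
  by have := sqnorm_lip z x; rewrite L0 expr0n /= !mul0r.
have Lp : 0 < L by rewrite lt_def Ln0 L_ge0.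
have gap1 := convex_smooth_grad_gap x z Lp; have gap2 := convex_smooth_grad_gap z x Lp.
rewrite -(opprB (G z)) sqnormN -(opprB z) dotvNr in gap2.
set q := sqnorm (G z - G x) / (2 * L) in gap1 gap2.
have -> : sqnorm (G z - G x) = L * (2 * q) by rewrite /q; field; rewrite gt_eqF.
by rewrite ler_pM2l // dotvBl; lra.
Qed.

Lemma sqnorm_grad_sgd_step y g gam : 0 <= gam -> gam * L <= 1 ->
  sqnorm (G (y - gam *: g)) <= sqnorm (G y) + gam * L * sqnorm (g - G y).
Proof.
move=> gam0 c1; set c := gam * L.
have c0 : 0 <= c by rewrite mulr_ge0.
set a := y - gam *: g; set D := G a - G y; set e := g - G y.
have co : sqnorm D <= - c * (dotv D (G y) + dotv D e).
  have := grad_cocoercive y a; rewrite -/D /a addrAC subrr add0r dotvNr dotvZr.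
  by rewrite -dotvDr /e addrC subrK /c; lra.
have -> : G a = G y + D by rewrite addrC subrK.
rewrite sqnormD (dotvC (G y)).
have D_ge0 := sqnorm_ge0 D; have e_ge0 := sqnorm_ge0 e.
have [c_eq0|c_neq0] := eqVneq c 0.
  have D_le0 : sqnorm D <= 0 ^+ 2 * sqnorm (G y).
    by move: co; rewrite c_eq0 oppr0 expr0n /= !mul0r.
  have := normr_dotv_le D (G y) 0 (lexx 0) D_le0.
  by rewrite c_eq0 mul0r normr_le0 => /eqP ->; lra.
have c_gt0 : 0 < c by rewrite lt_def c_neq0 c0.
have := sqnorm_ge0 (D + c *: e); rewrite sqnormD dotvZr sqnormZ => De_ge0.
suff : c * (2 * dotv D (G y) + sqnorm D) <= c * (c * sqnorm e) by rewrite ler_pM2l //; lra.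
have : 0 <= sqnorm D * (1 - c) by rewrite mulr_ge0 // subr_ge0.
nra.
Qed.

End SmoothFunction.

(* The integrand of the outer integral in [local_sgd_expect] is itself an
   iterated integral, whose measurability is not available. *)
Lemma ge0_le_integralT {R : realType} {dT : measure_display} {T : measurableType dT}
    (mu : {measure set T -> \bar R}) (f1 f2 : T -> \bar R) :
  (forall x, (0 <= f1 x)%E) -> (forall x, (f1 x <= f2 x)%E) ->
  (\int[mu]_x f1 x <= \int[mu]_x f2 x)%E.
Proof.
move=> f1_ge0 f12; rewrite !ge0_integralTE // => [|x]; last exact: le_trans (f12 x).
apply: ereal_sup_le => _ [h hf1 <-]; exists h => //= x.
exact: le_trans (hf1 x) (f12 x).
Qed.

Section LocalSGDExpectation.
Context {R : realType} {dT : measure_display} {T : measurableType dT}.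
Local Open Scope ereal_scope.
Variables (P : probability T R) (k : nat) (g : T -> 'rV[R]_k -> 'rV[R]_k)
  (G : 'rV[R]_k -> 'rV[R]_k) (gam c sig2 : R).
Hypothesis c_ge0 : (0 <= c)%R.
Hypothesis sgd_step : forall y xi,
  (sqnorm (G (y - gam *: g xi y)) <= sqnorm (G y) + c * sqnorm (g xi y - G y))%R.
Hypothesis noise_meas : forall y, measurable_fun setT (fun xi => sqnorm (g xi y - G y)).
Hypothesis noise_var : forall y, \int[P]_xi (sqnorm (g xi y - G y))%:E <= sig2%:E.

Let sqnorm_G y := (sqnorm (G y))%:E.

Lemma local_sgd_expect_ge0 t y : 0 <= local_sgd_expect P g gam sqnorm_G t y.
Proof.
elim: t y => [|t IH] y /=; first by rewrite lee_fin sqnorm_ge0.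
by apply: integral_ge0 => xi _; exact: IH.
Qed.

Lemma local_sgd_expect_sqnorm_grad_le t y :
  local_sgd_expect P g gam sqnorm_G t y <= (sqnorm (G y) + t%:R * (c * sig2))%:E.
Proof.
elim: t y => [|t IH] y /=; first by rewrite mul0r addr0.
set A := (sqnorm (G y) + t%:R * (c * sig2))%R.
have noise_ge0 xi : 0 <= (sqnorm (g xi y - G y))%:E by rewrite lee_fin sqnorm_ge0.
apply: (@le_trans _ _ (\int[P]_xi (A%:E + c%:E * (sqnorm (g xi y - G y))%:E))).
  apply: ge0_le_integralT => [xi|xi]; first exact: local_sgd_expect_ge0.
  apply: le_trans (IH _) _; rewrite -EFinM -EFinD lee_fin /A.
  by have := sgd_step y xi; lra.
have sig2_ge0 : (0 <= sig2)%R.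
  by rewrite -lee_fin; apply: le_trans (noise_var y); exact: integral_ge0.
have A_ge0 : (0 <= A)%R by rewrite addr_ge0 ?sqnorm_ge0 // !mulr_ge0.
have mnoise := (measurable_realfun.measurable_EFinP _ _).2 (noise_meas y).
rewrite ge0_integralD //; last 2 first.
- by move=> ? _; rewrite mule_ge0 // lee_fin sqnorm_ge0.
- exact: measurable_funeM.
rewrite integral_cst // [X in _ * X + _](_ : _ = 1); last exact: probability_setT.
rewrite mule1 ge0_integralZl //.
have c_ge0E : 0 <= c%:E by rewrite lee_fin.
apply: le_trans (leeD2l _ (lee_wpmul2l c_ge0E (noise_var y))) _.
by rewrite -EFinM -EFinD lee_fin /A -addn1 natrD; lra.
Qed.

End LocalSGDExpectation.

Section BlockUpdate.
Context {R : realType} {n : nat} {d : 'I_n -> nat}.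
Implicit Types x : jact R d.

Lemma upd_same x i y : upd x i y i = y.
Proof. by rewrite /upd; case: eqP => // e; rewrite (eq_irrelevance e erefl) castmx_id. Qed.

Lemma upd_upd x i y z : upd (upd x i y) i z = upd x i z.
Proof. by apply: functional_extensionality_dep => j; rewrite /upd; case: eqP. Qed.

Lemma upd_id x i : upd x i (x i) = x.
Proof.
apply: functional_extensionality_dep => j; rewrite /upd; case: eqP => // e.
by subst j; rewrite castmx_id.
Qed.

End BlockUpdate.

Theorem lemma3 (R : realType) (n : nat) (d : 'I_n -> nat)
  (dxi : measure_display) (Xi : measurableType dxi)
  (Dist : 'I_n -> probability Xi R)
  (f : 'I_n -> jact R d -> R) (gradf : forall i : 'I_n, jact R d -> 'rV[R]_(d i))
  (fxi : 'I_n -> Xi -> jact R d -> R)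
  (gradfxi : forall i : 'I_n, Xi -> jact R d -> 'rV[R]_(d i))
  (L sigma : 'I_n -> R)
  (Hf : forall i x, (Dist i).-integrable setT (fun xi => (fxi i xi x)%:E) /\
          (\int[Dist i]_xi (fxi i xi x)%:E = (f i x)%:E)%E)
  (Hgradf : forall i x, is_grad (fun y => f i (upd x i y)) (x i) (gradf i x))
  (Hgradfxi : forall i xi x,
      is_grad (fun y => fxi i xi (upd x i y)) (x i) (gradfxi i xi x))
  (Hmeas : forall i x (c : 'I_(d i)),
      measurable_fun setT (fun xi => gradfxi i xi x 0 c))
  (Hunb : forall i x (c : 'I_(d i)),
      (Dist i).-integrable setT (fun xi => (gradfxi i xi x 0 c)%:E) /\
      (\int[Dist i]_xi (gradfxi i xi x 0 c)%:E = (gradf i x 0 c)%:E)%E)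
  (Hcvx : forall i x, convex_fun (fun y => f i (upd x i y)))
  (HL0 : forall i, 0 <= L i)
  (Hsm : forall i x (y z : 'rV[R]_(d i)),
      enorm (gradf i (upd x i y) - gradf i (upd x i z)) <= L i * enorm (y - z))
  (Hbv : forall i x,
      (\int[Dist i]_xi (sqnorm (gradfxi i xi x - gradf i x))%:E
         <= (sigma i ^+ 2)%:E)%E)
  (tau Rr : nat) (Htau : (1 <= tau)%N) (HR : (1 <= Rr)%N)
  (i : 'I_n) (p : nat) (Hp : (p < Rr)%N)
  (gam : R) (Hgam0 : 0 < gam)
  (Hgam1 : gam * L i <= 1) (Hgam2 : gam * L i * (tau - 1)%:R <= 1)
  (x0 : jact R d)
  (j : nat) (Hj : (tau * p < j <= tau * p.+1)%N) :
  (local_sgd_expect (Dist i) (fun xi y => gradfxi i xi (upd x0 i y)) gam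
     (fun y => (sqnorm (gradf i (upd x0 i y)))%:E) (j - tau * p) (x0 i)
   <= (sqnorm (gradf i x0)
       + 2 * (j - tau * p)%:R * gam * L i * sigma i ^+ 2)%:E)%E.
Proof.
pose phi y := f i (upd x0 i y).
pose G y := gradf i (upd x0 i y).
pose g xi y := gradfxi i xi (upd x0 i y).
have phi_grad y : is_grad phi y (G y).
  have := Hgradf i (upd x0 i y); rewrite upd_same.
  by have -> : (fun z => f i (upd (upd x0 i y) i z)) = phi by apply: funext => z; rewrite upd_upd.
have sgd_step y xi :
    sqnorm (G (y - gam *: g xi y)) <= sqnorm (G y) + gam * L i * sqnorm (g xi y - G y).
  exact: sqnorm_grad_sgd_step phi_grad (HL0 i) (Hsm i x0) (Hcvx i x0) _ _ _ (ltW Hgam0) Hgam1.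
have noise_meas y : measurable_fun setT (fun xi => sqnorm (g xi y - G y)).
  apply: measurable_sum => c; under [fun _ => _]funext do rewrite !mxE.
  apply: measurable_realfun.measurable_funX.
  exact: measurable_realfun.measurable_funB (Hmeas _ _ _) (measurable_cst _).
have c_ge0 : 0 <= gam * L i := mulr_ge0 (ltW Hgam0) (HL0 i).
have noise_var y := Hbv i (upd x0 i y).
have := local_sgd_expect_sqnorm_grad_le _ _ _ _ _ _ _ c_ge0 sgd_step noise_meas noise_var
  (j - tau * p) (x0 i).
move/le_trans; apply; rewrite lee_fin /G upd_id.
set m := (j - tau * p)%:R.
have growth_ge0 : 0 <= m * (gam * L i * sigma i ^+ 2).
  by rewrite mulr_ge0 // mulr_ge0 ?sqr_ge0.
have -> : 2 * m * gam * L i * sigma i ^+ 2 = 2 * (m * (gam * L i * sigma i ^+ 2)) by ring.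
lra.
Qed.
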